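(* Let $\mathbf{f}$ be the Fibonacci sequence, fixed point of the substitution $0\mapsto01$, $1\mapsto0$. For an integer $k\ge1$, $\mathbf{f}$ is totally $(k,1)$-unbalanced if and only if $k\ge4$.
   Context: For positive integers $k,C$, a sequence $\mathbf{x}$ is totally $(k,C)$-unbalanced if for every length-$k$ factor $w$ of $\mathbf{x}$ there exist two factors $u,v$ of $\mathbf{x}$ with $|u|=|v|$ and $||u|_w-|v|_w|>C$, where $|u|_w$ is the number of (possibly overlapping) occurrences of $w$ in $u$. *)

From mathcomp Require Import all_boot.
Set Implicit Arguments. Unset Strict Implicit. Unset Printing Implicit Defensive.

Definition fib_sub_letter (a : nat) : seq nat :=
  if a == 0 then [:: 0; 1] else [:: 0].
Definition fib_sub (w : seq nat) : seq nat := flatten (map fib_sub_letter w).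

(* The n-th iterate has length F_{n+2} >= n+1, and each
   iterate is a prefix of the next, so the i-th letter of the fixed point is
   the i-th letter of fib_sub^(i+1)(0). *)
Definition fib_word (i : nat) : nat := nth 0 (iter i.+1 fib_sub [:: 0]) i.

Definition is_factor (x : nat -> nat) (u : seq nat) : Prop :=
  exists i, u = mkseq (fun j => x (i + j)) (size u).

Definition occ (u w : seq nat) : nat :=
  count (fun i => (i + size w <= size u) && (take (size w) (drop i u) == w))
        (iota 0 (size u).+1).

Definition totally_unbalanced (x : nat -> nat) (k C : nat) : Prop :=
  forall w, size w = k -> is_factor x w ->
    exists u v, [/\ is_factor x u, is_factor x v, size u = size v &
                   (C < occ u w - occ v w) || (C < occ v w - occ u w)].

From mathcomp Require Import all_boot zify.
Set Implicit Arguments. Unset Strict Implicit. Unset Printing Implicit Defensive.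

(* Since the Fibonacci word f is the fixed point of the substitution s, the
   image s(f t) of its t-th letter starts at position P t = fib_pos t, which is
   t plus the number of 0s among f 0, ..., f (t-1).  The 0s of f are exactly
   the positions P t, and the image of a window of m letters starting at t
   has length m + (number of 0s in it).  Comparing two windows of length n through the
   windows of letters whose images they contain or are covered by, an
   induction on n shows that f is balanced: two windows of equal length
   differ by at most one in their numbers of 0s, hence of 1s.

   For k <= 3 the factors 1, 01 and 010 occur exactly where a 1 occurs (at a
   fixed offset), so their occurrence counts in equal-length windows differ by
   at most one.  For k >= 4 every factor w admits two occurrences at some
   distance g > 0 and g + 1 consecutive positions where w does not occur; the
   windows of length g + |w| starting there contain at least two and no
   occurrences of w.  This property lifts from the preimage of w under s to w
   (balance makes the lifted gap long enough), so by induction on |w| it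
   reduces to the factors whose preimage has length at most 3, which are
   checked by computation on a prefix of f. *)

Definition window (x : nat -> nat) (i n : nat) : seq nat := map x (iota i n).

Lemma size_window x i n : size (window x i n) = n.
Proof. by rewrite size_map size_iota. Qed.

Lemma window_add x i m n : window x i (m + n) = window x i m ++ window x (i + m) n.
Proof. by rewrite /window iotaD map_cat. Qed.

Lemma nth_window x i n j : j < n -> nth 0 (window x i n) j = x (i + j).
Proof. by move=> lt_jn; rewrite (nth_map 0) ?size_iota // nth_iota. Qed.

Lemma take_drop_window x i n j k :
  j + k <= n -> take k (drop j (window x i n)) = window x (i + j) k.
Proof.
move=> le_jk_n; rewrite /window -map_drop -map_take drop_iota take_iota.
by congr (map x (iota _ _)); lia.
Qed.

Lemma prefix_windowE s x i n : prefix s (window x i n) -> s = window x i (size s).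
Proof.
move=> pre; have le_sn := size_prefix pre; rewrite size_window in le_sn.
move: pre; rewrite prefixE -[window x i n]drop0 take_drop_window ?addn0 //.
by move=> /eqP ->.
Qed.

Lemma is_factorE x u : is_factor x u <-> exists i, u = window x i (size u).
Proof.
have mkseqE i : mkseq (fun j => x (i + j)) (size u) = window x i (size u).
  by rewrite /mkseq /window -{2}[i]addn0 iotaDl -map_comp.
by split=> -[i u_eq]; exists i; rewrite ?mkseqE // -mkseqE.
Qed.

Lemma prefix_window x i m n : m <= n -> prefix (window x i m) (window x i n).
Proof. by move=> /subnKC <-; rewrite window_add prefix_prefix. Qed.

(** * The Fibonacci word as a fixed point *)

Lemma fib_sub_cat s t : fib_sub (s ++ t) = fib_sub s ++ fib_sub t.
Proof. by rewrite /fib_sub map_cat flatten_cat. Qed.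

Lemma size_fib_sub s : size (fib_sub s) = size s + count_mem 0 s.
Proof.
elim: s => //= a s IH; rewrite size_cat IH /fib_sub_letter.
by case: eqP => _ /=; lia.
Qed.

Lemma count_fib_sub s : count_mem 0 (fib_sub s) = size s.
Proof.
elim: s => //= a s IH; rewrite count_cat IH /fib_sub_letter.
by case: eqP.
Qed.

Lemma fib_sub_le1 s : all (fun a => a <= 1) (fib_sub s).
Proof.
elim: s => //= a s IH; rewrite all_cat IH andbT /fib_sub_letter.
by case: eqP.
Qed.

Lemma prefix_fib_sub s t : prefix s t -> prefix (fib_sub s) (fib_sub t).
Proof. by move=> /prefixP [r ->]; rewrite fib_sub_cat prefix_prefix. Qed.

Definition fib_iter n := iter n fib_sub [:: 0].

Lemma prefix_fib_iter m n : m <= n -> prefix (fib_iter m) (fib_iter n).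
Proof.
move: m n; apply: (homo_leq (r := fun s t => prefix s t)) => [s|t s r|n].
- exact: prefix_refl.
- exact: prefix_trans.
- by elim: n => // n IH; apply: prefix_fib_sub.
Qed.

Lemma size_fib_iter n : n < size (fib_iter n).
Proof.
elim: n => // n IH; rewrite [fib_iter _]/= size_fib_sub.
have : 0 \in fib_iter n by apply: prefix1s (prefix_fib_iter (leq0n n)).
by rewrite -has_pred1 has_count; lia.
Qed.

Lemma fib_iterE n : fib_iter n = window fib_word 0 (size (fib_iter n)).
Proof.
apply: (@eq_from_nth _ 0) => [|i lt_i]; first by rewrite size_window.
rewrite nth_window // add0n /fib_word.
have nthE m : m <= n + i.+1 -> i < size (fib_iter m) ->
    nth 0 (fib_iter m) i = nth 0 (fib_iter (n + i.+1)) i.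
  move=> /prefix_fib_iter; rewrite prefixE => /eqP pre lt_im.
  by rewrite -[in LHS]pre nth_take.
rewrite (nthE n) ?leq_addr // (nthE i.+1) ?leq_addl //.
exact: ltnW (size_fib_iter _).
Qed.

Lemma fib_word_le1 i : fib_word i <= 1.
Proof.
rewrite /fib_word; have [lt_i | le_i] := ltnP i (size (fib_iter i.+1)).
  by apply: (allP (fib_sub_le1 _)); apply: mem_nth.
by rewrite nth_default.
Qed.

Lemma fib_word_01 i : fib_word i = 0 \/ fib_word i = 1.
Proof. by have := fib_word_le1 i; case: (fib_word i) => [|[|]]; auto. Qed.

Definition fib_pos t := size (fib_sub (window fib_word 0 t)).

Definition zeros i n := count_mem 0 (window fib_word i n).

Lemma fib_sub_window t : fib_sub (window fib_word 0 t) = window fib_word 0 (fib_pos t).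
Proof.
have pre_t : prefix (window fib_word 0 t) (fib_iter t).
  by rewrite fib_iterE prefix_window // ltnW ?size_fib_iter.
have := prefix_fib_sub pre_t.
by rewrite -[fib_sub (fib_iter t)]/(fib_iter t.+1) fib_iterE => /prefix_windowE.
Qed.

Lemma window_fib_pos_succ t :
  window fib_word 0 (fib_pos t.+1) = window fib_word 0 (fib_pos t) ++ fib_sub_letter (fib_word t).
Proof.
rewrite -!fib_sub_window -addn1 window_add fib_sub_cat add0n.
by congr (_ ++ _); apply: cats0.
Qed.

Lemma zeros_add i m n : zeros i (m + n) = zeros i m + zeros (i + m) n.
Proof. by rewrite /zeros window_add count_cat. Qed.

Lemma zeros1 i : zeros i 1 = (fib_word i == 0).
Proof. by rewrite /zeros /window /= addn0. Qed.

Lemma zeros_le i n : zeros i n <= n.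
Proof. by rewrite -[X in _ <= X](size_window fib_word i) count_size. Qed.

Lemma leq_zeros i m n : m <= n -> zeros i m <= zeros i n.
Proof. by move=> /subnKC <-; rewrite zeros_add leq_addr. Qed.

Lemma fib_posE t : fib_pos t = t + zeros 0 t.
Proof. by rewrite /fib_pos size_fib_sub size_window. Qed.

Lemma fib_pos_add a m : fib_pos (a + m) = fib_pos a + (m + zeros a m).
Proof. by rewrite !fib_posE zeros_add add0n; lia. Qed.

Lemma fib_pos_succ t : fib_pos t.+1 = fib_pos t + (fib_word t == 0).+1.
Proof. by rewrite -addn1 fib_pos_add zeros1. Qed.

Lemma zeros_fib_pos t : zeros 0 (fib_pos t) = t.
Proof. by rewrite /zeros -fib_sub_window count_fib_sub size_window. Qed.

Lemma fib_word_block t j : j < (fib_word t == 0).+1 ->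
  fib_word (fib_pos t + j) = nth 0 (fib_sub_letter (fib_word t)) j.
Proof.
move=> lt_j; rewrite -[fib_pos t + j]add0n -(@nth_window _ _ (fib_pos t.+1)).
  by rewrite window_fib_pos_succ nth_cat size_window ltnNge leq_addr /= addKn.
by rewrite fib_pos_succ ltn_add2l.
Qed.

Lemma fib_word_pos t : fib_word (fib_pos t) = 0.
Proof.
by have := @fib_word_block t 0; rewrite addn0 /fib_sub_letter; case: eqP => _ ->.
Qed.

Lemma fib_word_pos_succ t : fib_word (fib_pos t).+1 = 1 - fib_word t.
Proof.
case: (fib_word_01 t) => ft.
  by have := @fib_word_block t 1; rewrite ft addn1 => ->.
by have := fib_pos_succ t; rewrite ft addn1 => <-; rewrite fib_word_pos.
Qed.

Lemma fib_pos_ltn a b : a < b -> fib_pos a < fib_pos b.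
Proof. by move=> lt_ab; rewrite -(subnKC (ltnW lt_ab)) fib_pos_add; lia. Qed.

Lemma fib_pos_ltE : {mono fib_pos : a b / a < b}.
Proof. exact/leqW_mono/leq_mono/fib_pos_ltn. Qed.

Lemma fib_pos_cover x : exists t, fib_pos t <= x < fib_pos t.+1.
Proof.
elim: x => [|x [t /andP [le_x lt_x]]]; first by exists 0.
have [lt_Sx | le_Sx] := ltnP x.+1 (fib_pos t.+1); first by exists t; lia.
by exists t.+1; have := fib_pos_ltn (ltnSn t.+1); lia.
Qed.

Lemma fib_pos_cases x : exists t, x = fib_pos t \/ x = (fib_pos t).+1 /\ fib_word t = 0.
Proof.
have [t bounds] := fib_pos_cover x; rewrite fib_pos_succ in bounds; exists t.
by move: bounds; case: (fib_word_01 t) => -> /=; lia.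
Qed.

Lemma fib_word_eq0 x : fib_word x = 0 -> exists t, x = fib_pos t.
Proof.
have [t [->|[-> ft]]] := fib_pos_cases x; first by exists t.
by rewrite fib_word_pos_succ ft.
Qed.

Lemma fib_word_eq1 x : fib_word x = 1 -> [/\ 0 < x, fib_word x.-1 = 0 & fib_word x.+1 = 0].
Proof.
have [t [->|[-> ft]]] := fib_pos_cases x; first by rewrite fib_word_pos.
move=> _; split=> //; first exact: fib_word_pos.
by have := fib_pos_succ t; rewrite ft /= addn2 => <-; apply: fib_word_pos.
Qed.

Lemma fib_word_no000 x : fib_word x = 0 -> fib_word x.+1 = 0 -> fib_word x.+2 = 0 -> False.
Proof.
move=> /fib_word_eq0 [t ->]; rewrite fib_word_pos_succ.
case: (fib_word_01 t) => ft; rewrite ft // => _.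
have := fib_pos_succ t; rewrite ft /= addn1 => <-.
rewrite fib_word_pos_succ; have [_ _] := fib_word_eq1 ft.
by case: (fib_word_01 t.+1) => ->.
Qed.

Lemma zeros2_gt0 i : 0 < zeros i 2.
Proof.
rewrite (zeros_add i 1 1) !zeros1 addn1.
by case: (fib_word_01 i) => [->|/fib_word_eq1 [_ _ ->]]; rewrite eqxx ?addn1.
Qed.

Lemma fib_pos_lt_zeros t x : (fib_pos t < x) = (t < zeros 0 x).
Proof.
apply/idP/idP => [lt_x | lt_t].
  have := leq_zeros 0 lt_x.
  by rewrite -[(fib_pos t).+1]addn1 zeros_add zeros_fib_pos add0n zeros1 fib_word_pos addn1.
apply: contraLR lt_t; rewrite -!leqNgt => le_x.
by rewrite -[t in _ <= t]zeros_fib_pos leq_zeros.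
Qed.

(** * Balance *)

Lemma zeros_window_cover y n : exists a, n < fib_pos (a + (zeros y n).+1) - fib_pos a.
Proof.
have := zeros_add 0 y n; rewrite add0n.
set a := zeros 0 y; set b := zeros 0 (y + n) => zeros_split.
have le_b : y + n <= fib_pos b by rewrite leqNgt fib_pos_lt_zeros ltnn.
have [a0|a_gt0] := posnP a.
  exists 0; rewrite a0 add0n in zeros_split; rewrite add0n -zeros_split subn0.
  by have := fib_pos_ltn (ltnSn b); lia.
exists a.-1; have : fib_pos a.-1 < y by rewrite fib_pos_lt_zeros -/a; lia.
have -> : a.-1 + (zeros y n).+1 = b by lia.
lia.
Qed.

Lemma zeros_window_inner x n : 0 < zeros x n ->
  exists c, fib_pos (c + (zeros x n).-1) - fib_pos c < n.
Proof.
move=> zeros_gt0; exists (zeros 0 x).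
have := zeros_add 0 x n; rewrite add0n => zeros_split.
have : x <= fib_pos (zeros 0 x) by rewrite leqNgt fib_pos_lt_zeros ltnn.
have : fib_pos (zeros 0 x + (zeros x n).-1) < x + n by rewrite fib_pos_lt_zeros; lia.
have := zeros_le x n; lia.
Qed.

(* If the window at x had two more 0s than the window at y, it would contain
   the image of L letters while the window at y is covered by the image of at
   most L letters; comparing image lengths contradicts balance at length L. *)
Lemma zeros_balanced n x y : zeros x n <= zeros y n + 1.
Proof.
have [N] := ubnP n; elim: N n x y => [|N IH] n x y // lt_nN.
rewrite leqNgt; apply/negP => unbalanced.
have [c inner] := @zeros_window_inner x n ltac:(lia).
have [a cover] := zeros_window_cover y n.
rewrite !fib_pos_add in inner cover.
set L := (zeros x n).-1 in inner; set m := (zeros y n).+1 in cover.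
have le_mL : m <= L by lia.
have := IH L a c ltac:(lia); have := leq_zeros a le_mL; lia.
Qed.

Lemma count_ones_window x n : count_mem 1 (window fib_word x n) = n - zeros x n.
Proof.
elim: n x => // n IH x; rewrite -[n.+1]add1n window_add count_cat IH zeros_add zeros1.
rewrite /= addn0; have := zeros_le (x + 1) n.
by case: (fib_word_01 x) => ->; lia.
Qed.

Lemma ones_balanced n x y :
  count_mem 1 (window fib_word x n) <= count_mem 1 (window fib_word y n) + 1.
Proof.
rewrite !count_ones_window.
by have := zeros_balanced n y x; have := zeros_le x n; have := zeros_le y n; lia.
Qed.

(** * Occurrences and desubstitution *)

Definition occurs_at (w : seq nat) (i : nat) : Prop := w = window fib_word i (size w).

Lemma occurs_at_cons a w i : occurs_at (a :: w) i <-> fib_word i = a /\ occurs_at w i.+1.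
Proof. by rewrite /occurs_at /=; split=> [[<- eq_w] | [<- eq_w]]; [split | congr (_ :: _)]. Qed.

Lemma occurs_at_cat u v i : occurs_at (u ++ v) i <-> occurs_at u i /\ occurs_at v (i + size u).
Proof.
rewrite /occurs_at size_cat window_add; split=> [/eqP | [eq_u eq_v]].
  by rewrite eqseq_cat ?size_window // => /andP [/eqP ? /eqP ?].
by rewrite -eq_u -eq_v.
Qed.

Lemma occurs_at_le1 w i : occurs_at w i -> all (fun a => a <= 1) w.
Proof. by move=> ->; apply/allP => a /mapP [j _ ->]; apply: fib_word_le1. Qed.

Lemma occurs_at_infix u w i : infix u w -> occurs_at w i -> exists j, occurs_at u j.
Proof.
move=> /infixP [p [q ->]] /occurs_at_cat [_ /occurs_at_cat [occ_u _]].
by exists (i + size p).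
Qed.

Lemma occurs_at_pos_succ0 r t :
  occurs_at (0 :: r) (fib_pos t).+1 <-> fib_word t = 1 /\ occurs_at (0 :: r) (fib_pos t.+1).
Proof.
case: (fib_word_01 t) => ft; last by rewrite fib_pos_succ ft /= addn1; tauto.
by rewrite occurs_at_cons fib_word_pos_succ ft; split=> -[].
Qed.

Lemma occurs_at_pos_succ1 r t :
  occurs_at (1 :: r) (fib_pos t).+1 <-> fib_word t = 0 /\ occurs_at r (fib_pos t.+1).
Proof.
rewrite occurs_at_cons fib_word_pos_succ fib_pos_succ.
by case: (fib_word_01 t) => ->; rewrite /= ?addn2; split=> -[].
Qed.

(* Preimage under fib_sub, dropping a final lone 0 (the start of the next
   block); the letter 2, which never occurs in fib_word, marks words that are
   not of this form. *)
Fixpoint desub (w : seq nat) : seq nat :=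
  match w with
  | [::] | [:: 0] => [::]
  | 0 :: 1 :: r => 0 :: desub r
  | 0 :: (0 :: _) as r => 1 :: desub r
  | _ => [:: 2]
  end.

Lemma occurs_at_desub w t : occurs_at w (fib_pos t) <-> occurs_at (desub w) t.
Proof.
have [n] := ubnP (size w); elim: n w t => [|n IH] w t //.
have not2 i : ~ occurs_at [:: 2] i by move/occurs_at_le1.
case: w => [|[|a] r] /= lt_wn; first by [].
- case: r lt_wn => [|[|[|b]] r] /= lt_wn.
  + by rewrite occurs_at_cons fib_word_pos.
  + rewrite occurs_at_cons occurs_at_pos_succ0 IH // (occurs_at_cons 1).
    by rewrite fib_word_pos; tauto.
  + rewrite occurs_at_cons occurs_at_pos_succ1 IH ?occurs_at_cons ?fib_word_pos; last lia.
    by tauto.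
  + split=> [/occurs_at_cons [_ /occurs_at_cons [fb _]] | /not2] //.
    by have := fib_word_le1 (fib_pos t).+1; rewrite fb.
- by split=> [/occurs_at_cons []|/not2]; rewrite ?fib_word_pos.
Qed.

Lemma desub_spec w : all (fun a => a <= 1) (desub w) ->
  w = fib_sub (desub w) \/ w = rcons (fib_sub (desub w)) 0.
Proof.
have [n] := ubnP (size w); elim: n w => [|n IH] w //.
case: w => [|[|a] r] lt_wn; [by left | | by []].
case: r lt_wn => [|[|[|b]] r] lt_wn; [by right | | | by []].
- change (desub [:: 0, 0 & r]) with (1 :: desub (0 :: r)).
  by move=> /andP [_ /IH [|E|E]]; [move: lt_wn => /=; lia | left | right]; rewrite {1}E.
- change (desub [:: 0, 1 & r]) with (0 :: desub r).
  by move=> /andP [_ /IH [|E|E]]; [move: lt_wn => /=; lia | left | right]; rewrite {1}E.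
Qed.

Lemma size_desub0 v : size (desub (0 :: v)) <= size v.
Proof.
have [n] := ubnP (size v); elim: n v => [|n IH] v //.
case: v => [|[|[|a]] r] // lt_vn; first by apply: (IH r); move: lt_vn => /=; lia.
case: r lt_vn => [|[|b] r] // lt_rn.
by apply/leqW/IH; move: lt_rn => /=; lia.
Qed.

(** * Factors of length at least 4 *)

Definition pair_and_gap (w : seq nat) : Prop :=
  exists t g s, [/\ 0 < g, occurs_at w t, occurs_at w (t + g) &
    forall i, s < i < s + g.+2 -> ~ occurs_at w i].

Lemma pair_and_gap_desub v : pair_and_gap (desub (0 :: v)) -> pair_and_gap (0 :: v).
Proof.
move=> [t [g [s [g_gt0 occ_t occ_tg gap]]]].
have lt_t : fib_pos t < fib_pos (t + g) by rewrite fib_pos_ltE; lia.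
exists (fib_pos t), (fib_pos (t + g) - fib_pos t), (fib_pos s); split.
- by rewrite subn_gt0.
- exact/occurs_at_desub.
- by rewrite subnKC ?occurs_at_desub // ltnW.
move=> i bounds occ_i.
have [t' def_i] : exists t', i = fib_pos t'.
  by apply: fib_word_eq0; have /occurs_at_cons [] := occ_i.
move: bounds occ_i; rewrite def_i fib_pos_ltE => /andP [lt_s lt_sg] /occurs_at_desub.
apply: gap; rewrite lt_s -fib_pos_ltE.
have := zeros_add s g 2; have := zeros2_gt0 (s + g); have := zeros_balanced g t s.
by rewrite addn2 !fib_pos_add in lt_sg *; lia.
Qed.

Lemma pair_and_gap_behead a w : (forall i, occurs_at w i -> 0 < i /\ fib_word i.-1 = a) ->
  pair_and_gap (a :: w) -> pair_and_gap w.
Proof.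
move=> prec [t [g [s [g_gt0 /occurs_at_cons [_ occ_t] /occurs_at_cons [_ occ_tg] gap]]]].
exists t.+1, g, s.+1; split=> //.
move=> i /andP [lt_s lt_sg] occ_i; have [i_gt0 prev_i] := prec i occ_i.
by apply: (gap i.-1); [lia | apply/occurs_at_cons; rewrite prednK].
Qed.

Definition occurs_in (s w : seq nat) (i : nat) : bool :=
  (i + size w <= size s) && (take (size w) (drop i s) == w).

Definition absent_in (s w : seq nat) (i : nat) : bool :=
  (i + size w <= size s) && (take (size w) (drop i s) != w).

Definition pair_and_gapb (s w : seq nat) : bool :=
  let occs := [seq i <- iota 0 (size s) | occurs_in s w i] in
  has (fun k => let g := nth 0 occs k.+1 - nth 0 occs k in
    (0 < g) && has (fun j => all (absent_in s w) (iota j.+1 g.+1)) occs)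
  (iota 0 (size occs).-1).

Lemma occurs_in_window n w i : occurs_in (window fib_word 0 n) w i -> occurs_at w i.
Proof.
rewrite /occurs_in size_window => /andP [le_n /eqP].
by rewrite take_drop_window // add0n => <-; rewrite /occurs_at size_window.
Qed.

Lemma absent_in_window n w i : absent_in (window fib_word 0 n) w i -> ~ occurs_at w i.
Proof.
rewrite /absent_in size_window => /andP [le_n].
by rewrite take_drop_window // add0n => /eqP neq /esym.
Qed.

Lemma pair_and_gapb_sound n w : pair_and_gapb (window fib_word 0 n) w -> pair_and_gap w.
Proof.
move=> /hasP [k]; set occs := filter _ _; rewrite mem_iota add0n => lt_k.
have occ_nth j : j < size occs -> occurs_at w (nth 0 occs j).
  by move=> /(mem_nth 0); rewrite mem_filter => /andP [/occurs_in_window].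
move=> /andP [g_gt0 /hasP [s _ /allP gap]].
exists (nth 0 occs k), (nth 0 occs k.+1 - nth 0 occs k), s; split=> //.
- by apply: occ_nth; lia.
- by rewrite subnKC; [apply: occ_nth | ]; lia.
move=> i lt_i; apply: (absent_in_window (n := n)); apply: gap.
by rewrite mem_iota; lia.
Qed.

Fixpoint bin_words n : seq (seq nat) :=
  if n is n'.+1 then [::] :: [seq a :: w | a <- [:: 0; 1], w <- bin_words n']
  else [:: [::]].

Lemma mem_bin_words n w : size w <= n -> all (fun a => a <= 1) w -> w \in bin_words n.
Proof.
elim: n w => [|n IH] [|a w] // le_wn /andP [le_a le_w].
rewrite in_cons; apply/orP; right; apply: allpairs_f; last exact: IH.
by move: le_a; case: (a) => [|[|]].
Qed.

Definition fib_admissible (d : seq nat) : bool :=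
  ~~ infix [:: 1; 1] d && ~~ infix [:: 0; 0; 0] d.

Lemma occurs_at_admissible d t : occurs_at d t -> fib_admissible d.
Proof.
move=> occ_d; apply/andP; split; apply/negP => /occurs_at_infix /(_ occ_d) [j].
  by move=> /occurs_at_cons [/fib_word_eq1 [_ _ f_next]] /occurs_at_cons []; rewrite f_next.
move=> /occurs_at_cons [f0 /occurs_at_cons [f1 /occurs_at_cons [f2 _]]].
exact: fib_word_no000 f0 f1 f2.
Qed.

(* The witnesses for the finitely many factors whose preimage has length at
   most 3 all lie in the prefix fib_iter 7, of length 34. *)
Lemma short_desub_table :
  all (fun d => ~~ fib_admissible d ||
    all (fun w => (size w < 4) || pair_and_gapb (fib_iter 7) w)
      [:: fib_sub d; rcons (fib_sub d) 0])
  (bin_words 3).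
Proof. by vm_compute. Qed.

Lemma pair_and_gap_head0 v t : 4 <= size (0 :: v) -> occurs_at (0 :: v) (fib_pos t) ->
  (4 <= size (desub (0 :: v)) -> pair_and_gap (desub (0 :: v))) -> pair_and_gap (0 :: v).
Proof.
move=> size_w /occurs_at_desub occ_d long_d.
have [d_ge4 | d_lt4] := leqP 4 (size (desub (0 :: v))).
  exact/pair_and_gap_desub/long_d.
have le1 := occurs_at_le1 occ_d.
have /allP /(_ _ (mem_bin_words d_lt4 le1)) := short_desub_table.
rewrite (occurs_at_admissible occ_d) => /allP table.
have w_img : 0 :: v \in [:: fib_sub (desub (0 :: v)); rcons (fib_sub (desub (0 :: v))) 0].
  by rewrite !inE; case: (desub_spec le1) => <-; rewrite eqxx ?orbT.
by have := table _ w_img; rewrite ltnNge size_w fib_iterE; apply: pair_and_gapb_sound.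
Qed.

Lemma factor_pair_and_gap n w i :
  size w <= n -> 4 <= size w -> occurs_at w i -> pair_and_gap w.
Proof.
elim: n w i => [|n IH] [|[|[|a]] r] i // size_w size_ge4 occ_w.
- have /occurs_at_cons [/fib_word_eq0 [t def_i] _] := occ_w; rewrite def_i in occ_w.
  apply: (pair_and_gap_head0 size_ge4 occ_w) => d_ge4.
  apply: (IH _ t _ d_ge4); last exact/occurs_at_desub.
  by have := size_desub0 r; move: size_w => /=; lia.
- have /occurs_at_cons [f_i occ_r] := occ_w; have [i_gt0 f_prev f_next] := fib_word_eq1 f_i.
  case: r occ_r size_w size_ge4 {occ_w} => [|b r] // /occurs_at_cons [fb occ_r] size_w size_ge4.
  rewrite f_next in fb; subst b.
  apply: (@pair_and_gap_behead 0) => [j /occurs_at_cons [/fib_word_eq1 [] //]|].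
  have /fib_word_eq0 [t def_i] := f_prev.
  have occ_w : occurs_at [:: 0, 1, 0 & r] (fib_pos t).
    by rewrite -def_i !occurs_at_cons prednK //; tauto.
  apply: (pair_and_gap_head0 _ occ_w) => [|d_ge4]; first by move: size_ge4 => /=; lia.
  apply: (IH _ t _ d_ge4); last exact/occurs_at_desub.
  by have := size_desub0 r; move: size_w => /=; lia.
- by have /occurs_at_cons [fa _] := occ_w; have := fib_word_le1 i; rewrite fa.
Qed.

(** * Counting occurrences in windows *)

Lemma occ_window a n w : occ (window fib_word a n) w =
  count (fun i => (i + size w <= n) && (w == window fib_word (a + i) (size w))) (iota 0 n.+1).
Proof.
rewrite /occ size_window; apply: eq_in_count => i _.
by have [le_n | //] := leqP (i + size w) n; rewrite take_drop_window // eq_sym.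
Qed.

Lemma pair_and_gap_unbalanced w : pair_and_gap w ->
  exists u v, [/\ is_factor fib_word u, is_factor fib_word v, size u = size v &
    (1 < occ u w - occ v w) || (1 < occ v w - occ u w)].
Proof.
move=> [t [g [s [g_gt0 occ_t occ_tg gap]]]].
exists (window fib_word t (g + size w)), (window fib_word s.+1 (g + size w)).
split; rewrite ?size_window //; try by apply/is_factorE; eexists; rewrite size_window.
have -> : occ (window fib_word s.+1 (g + size w)) w = 0.
  rewrite occ_window; apply/eqP; rewrite -leqn0 leqNgt -has_count.
  apply/hasPn => i _; apply/negP => /andP [le_i /eqP occ_i].
  by apply: (gap (s.+1 + i)) => //; lia.
rewrite subn0 occ_window; apply/orP; left.
rewrite -addnS iotaD count_cat -[in iota 0 g](prednK g_gt0) /=.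
by rewrite addn0 -occ_t -occ_tg !eqxx leqnn leq_addl /=; lia.
Qed.

Lemma occ_window_marked w c : (forall i, occurs_at w i <-> fib_word (i + c) = 1) ->
  forall a n, occ (window fib_word a n) w = count_mem 1 (window fib_word (a + c) (n.+1 - size w)).
Proof.
move=> marked a n.
have mark_i i : (i + size w <= n) && (w == window fib_word (a + i) (size w)) =
    (fib_word (a + c + i) == 1) && (i < 0 + (n.+1 - size w)).
  rewrite andbC; congr (_ && _); last lia.
  by rewrite addnAC; apply/eqP/eqP => /(marked (a + i)).
rewrite occ_window (eq_count mark_i) -count_filter filter_iota_ltn ?leq_subr //.
by rewrite /window count_map -[in RHS](addn0 (a + c)) iotaDl count_map.
Qed.

Lemma marked_not_unbalanced w c : is_factor fib_word w ->
  (forall i, occurs_at w i <-> fib_word (i + c) = 1) ->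
  ~ totally_unbalanced fib_word (size w) 1.
Proof.
move=> fac_w marked unbal.
have [u [v [/is_factorE [i ->] /is_factorE [j ->] size_uv]]] := unbal w erefl fac_w.
rewrite !size_window in size_uv; rewrite !(occ_window_marked marked) size_uv.
have := ones_balanced ((size v).+1 - size w) (i + c) (j + c).
by have := ones_balanced ((size v).+1 - size w) (j + c) (i + c); lia.
Qed.

Lemma short_marked_factor k : 0 < k -> k < 4 -> exists w c,
  [/\ size w = k, is_factor fib_word w & forall i, occurs_at w i <-> fib_word (i + c) = 1].
Proof.
have occ_nil i : occurs_at [::] i by [].
case: k => [|[|[|[|k]]]] // _ _;
  [exists [:: 1], 0 | exists [:: 0; 1], 1 | exists [:: 0; 1; 0], 1];
  split=> // [|i]; try by [exists 0 | exists 1].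
all: have := occ_nil i.+1; have := occ_nil i.+2; have := occ_nil i.+3.
all: rewrite !occurs_at_cons ?addn0 ?addn1.
all: by split=> [| /[dup] /fib_word_eq1 [_ f_prev f_next] f_i]; tauto.
Qed.

Theorem theorem16 (k : nat) : 1 <= k ->
  (totally_unbalanced fib_word k 1 <-> 4 <= k).
Proof.
move=> k_gt0; split=> [unbal | k_ge4].
  rewrite leqNgt; apply/negP => k_lt4.
  have [w [c [size_w fac_w marked]]] := short_marked_factor k_gt0 k_lt4.
  by apply: (marked_not_unbalanced fac_w marked); rewrite size_w.
move=> w size_w /is_factorE [i occ_w].
apply/pair_and_gap_unbalanced/(factor_pair_and_gap (leqnn _) _ occ_w).
by rewrite size_w.
Qed.
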